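(* Let $G$ be a graph on $n$ vertices that has at least two independent (vertex-disjoint) edges. Then $D_{n-1}(G)$ is connected.
   Context: All graphs are finite and simple. A set $S \subseteq V(G)$ is a dominating set of $G$ if every vertex of $V(G)\setminus S$ is adjacent to a vertex of $S$. $\gamma(G)$ is the minimum cardinality of a dominating set of $G$. For an integer $k \ge \gamma(G)$, the $k$-dominating graph $D_k(G)$ is the graph whose vertices are the dominating sets of $G$ of cardinality at most $k$, with two such sets $A,B$ adjacent if and only if their symmetric difference $(A\setminus B)\cup(B\setminus A)$ consists of exactly one vertex of $G$. *)

From mathcomp Require Import all_boot.
Set Implicit Arguments. Unset Strict Implicit. Unset Printing Implicit Defensive.

Definition simple_graph (T : finType) (e : rel T) : Prop :=
  symmetric e /\ irreflexive e.

Definition dominating (T : finType) (e : rel T) (S : {set T}) : bool :=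
  [forall v, (v \notin S) ==> [exists u in S, e v u]].

Definition Dk_vertex (T : finType) (e : rel T) (k : nat) (S : {set T}) : bool :=
  dominating e S && (#|S| <= k).

Definition Dk_adj (T : finType) (A B : {set T}) : bool :=
  #|(A :\: B) :|: (B :\: A)| == 1.

Definition Dk_connected (T : finType) (e : rel T) (k : nat) : Prop :=
  forall A B : {set T}, Dk_vertex e k A -> Dk_vertex e k B ->
    exists p : seq {set T},
      [/\ all (Dk_vertex e k) p, path (@Dk_adj T) A p & last A p = B].

Definition has_two_independent_edges (T : finType) (e : rel T) : Prop :=
  exists a b c d : T, [/\ e a b, e c d & uniq [:: a; b; c; d]].

From mathcomp Require Import all_boot.
Set Implicit Arguments. Unset Strict Implicit. Unset Printing Implicit Defensive.

(* Write n = #|T| and k = n - 1.  Adding vertices to a dominating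
   set keeps it dominating, so a dominating set S can be grown one vertex at a
   time inside D_k(G) up to any superset X of size at most k.  Since every
   vertex S of D_k(G) has |S| < n, it misses some vertex v and therefore lies
   below the co-singleton T \ {v}; hence every vertex of D_k(G) is joined to
   some co-singleton.  Two co-singletons T \ {x}, T \ {y} are joined through
   T \ {x, y} as soon as x and y can be exchanged: each has a neighbour
   different from the other, so that T \ {x, y} is still dominating.  Finally,
   with independent edges ab and cd, every vertex v having a neighbour equals,
   or can be exchanged with, a or c, and c can be exchanged with a; so all co-singletons
   of D_k(G) lie in the component of T \ {a}, which gives connectivity. *)

Lemma Dk_adj_sym (T : finType) : symmetric (@Dk_adj T).
Proof. by move=> A B; rewrite /Dk_adj setUC. Qed.

Lemma Dk_adj_setU1 (T : finType) (A : {set T}) (x : T) :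
  x \notin A -> Dk_adj A (x |: A).
Proof.
move=> xA; rewrite /Dk_adj.
have -> : A :\: (x |: A) :|: (x |: A) :\: A = [set x].
  apply/setP => w; rewrite !inE.
  by case: (eqVneq w x) => [->|]; rewrite ?xA //=; case: (w \in A).
by rewrite cards1.
Qed.

Lemma dominating_superset (T : finType) (e : rel T) (S X : {set T}) :
  dominating e S -> S \subset X -> dominating e X.
Proof.
move=> /forallP domS sSX; apply/forallP => v; apply/implyP => vX.
have vS : v \notin S by apply: contra vX; apply: (subsetP sSX).
have /existsP [u /andP [uS evu]] := implyP (domS v) vS.
by apply/existsP; exists u; rewrite evu (subsetP sSX).
Qed.

Section StepRelation.
Variables (T : finType) (e : rel T) (k : nat).

Definition Dk_step (A B : {set T}) : bool :=
  [&& Dk_vertex e k A, Dk_vertex e k B & Dk_adj A B].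

Lemma Dk_step_sym : symmetric Dk_step.
Proof.
move=> A B; rewrite /Dk_step Dk_adj_sym.
by case: (Dk_vertex e k A); case: (Dk_vertex e k B).
Qed.

Lemma connect_superset (S X : {set T}) :
  dominating e S -> S \subset X -> #|X| <= k -> connect Dk_step S X.
Proof.
move=> domS sSX cardX; have [n] := ubnP #|X :\: S|.
elim: n S domS sSX => // n IH S domS sSX; rewrite ltnS => cardXS.
have [<-|neSX] := eqVneq S X; first exact: connect0.
have /subsetPn [x xX xS] : ~~ (X \subset S) by rewrite eqEsubset sSX in neSX.
have sxSX : x |: S \subset X by rewrite subUset sub1set xX.
have domxS : dominating e (x |: S) by apply: dominating_superset domS (subsetUr _ _).
apply: (connect_trans (y := x |: S)).
  apply: connect1; rewrite /Dk_step /Dk_vertex domS domxS Dk_adj_setU1 //.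
  by rewrite !(leq_trans (subset_leq_card _) cardX).
apply: IH => //; apply: leq_trans cardXS; apply: proper_card.
rewrite properEneq setDS ?subsetUr // andbT; apply/eqP => /setP /(_ x).
by rewrite !inE xX xS eqxx.
Qed.

Lemma Dk_walk_of_connect (A B : {set T}) :
  Dk_vertex e k A -> connect Dk_step A B ->
  exists p : seq {set T},
    [/\ all (Dk_vertex e k) p, path (@Dk_adj T) A p & last A p = B].
Proof.
move=> vA /connectP [p stepA ->]; exists p; split => //.
- elim: p A vA stepA => //= C p IH A _ /andP [/and3P [_ vC _] stepC].
  by rewrite vC (IH C).
- by apply: sub_path stepA => C D /and3P [].
Qed.

End StepRelation.

Section CoSingletons.
Variables (T : finType) (e : rel T).
Hypothesis e_irr : irreflexive e.

Let k := #|T| - 1.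

Lemma neighbour_neq (x y : T) : e x y -> y != x.
Proof. by apply: contraTneq => ->; rewrite e_irr. Qed.

Lemma card_setC1 (x : T) : #|[set~ x]| <= k.
Proof. by rewrite cardsC1 /k subn1. Qed.

(* Exchange: if distinct x, y each have a neighbour other than the other one,
   then T \ {x, y} is dominating, so it joins T \ {x} and T \ {y} in D_k(G). *)
Lemma connect_exchange (x y x' y' : T) :
  x != y -> e x x' -> x' != y -> e y y' -> y' != x ->
  connect (Dk_step e k) [set~ x] [set~ y].
Proof.
move=> nxy exx' nx'y eyy' ny'x.
have domxy : dominating e ([set~ x] :\ y).
  apply/forallP => w; apply/implyP; rewrite !inE negb_and !negbK.
  case/orP => /eqP ->; apply/existsP.
    by exists y'; rewrite !inE ny'x neighbour_neq.
  by exists x'; rewrite !inE nx'y neighbour_neq.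
apply: (connect_trans (y := [set~ x] :\ y)).
  rewrite (sym_connect_sym (Dk_step_sym e k)).
  by apply: connect_superset domxy (subsetDl _ _) (card_setC1 x).
apply: connect_superset domxy _ (card_setC1 y).
by apply/subsetP => w; rewrite !inE => /andP [].
Qed.

Lemma connect_to_cosingleton (S : {set T}) :
  0 < #|T| -> Dk_vertex e k S ->
  exists2 v : T, (exists u, e v u) & connect (Dk_step e k) S [set~ v].
Proof.
move=> T_gt0 /andP [domS cardS].
have [v vS] : exists v, v \notin S.
  apply/existsP; apply: contraTT cardS => /existsPn allS.
  have -> : S = setT by apply/setP => w; move: (allS w); rewrite negbK inE.
  by rewrite cardsT /k -ltnNge ltn_subrL T_gt0.
have /existsP [u /andP [_ evu]] := implyP (forallP domS v) vS.
exists v; first by exists u.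
apply: connect_superset domS _ (card_setC1 v).
by apply/subsetP => w wS; rewrite !inE; apply: contraNneq vS => <-.
Qed.

(* With independent edges ab and cd, the co-singleton of every vertex v that has
   a neighbour u reaches T \ {a}: v equals a or c, or can be exchanged with one
   of them (using u, or the partners b and d), and c can be exchanged with a. *)
Lemma connect_cosingleton_hub (a b c d v : T) :
  symmetric e -> e a b -> e c d -> uniq [:: a; b; c; d] -> (exists u, e v u) ->
  connect (Dk_step e k) [set~ v] [set~ a].
Proof.
move=> e_sym eab ecd + [u evu].
rewrite /= !inE !negb_or => /and4P [/and3P [nab nac nad] /andP [nbc nbd] ncd _].
have ca : connect (Dk_step e k) [set~ c] [set~ a].
  by apply: (@connect_exchange c a d b); rewrite // eq_sym.
case: (eqVneq v a) => [->|nva]; first exact: connect0.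
case: (eqVneq v c) => [-> //|nvc].
case: (eqVneq v b) => [->|nvb].
  apply: connect_trans ca; apply: (@connect_exchange b c a d);
  by [|rewrite e_sym|rewrite eq_sym].
case: (eqVneq v d) => [->|nvd].
  apply: (@connect_exchange d a c b); by [|rewrite e_sym|rewrite eq_sym].
case: (eqVneq u a) => [eua|nua].
  apply: connect_trans ca; apply: (@connect_exchange v c u d);
  by [|rewrite eua|rewrite eq_sym].
apply: (@connect_exchange v a u b); by [|rewrite eq_sym].
Qed.

End CoSingletons.

Theorem lemma2 (T : finType) (e : rel T) :
  simple_graph e -> has_two_independent_edges e ->
  Dk_connected e (#|T| - 1).
Proof.
move=> [e_sym e_irr] [a [b [c [d [eab ecd abcd]]]]].
have T_gt0 : 0 < #|T| by apply/card_gt0P; exists a.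
have to_hub v :
    (exists u, e v u) -> connect (Dk_step e (#|T| - 1)) [set~ v] [set~ a].
  exact: (connect_cosingleton_hub e_irr e_sym eab ecd abcd).
move=> A B vA vB; apply: (Dk_walk_of_connect vA).
have [v nbv Av] := connect_to_cosingleton T_gt0 vA.
have [w nbw Bw] := connect_to_cosingleton T_gt0 vB.
apply: connect_trans (connect_trans Av (to_hub v nbv)) _.
rewrite (sym_connect_sym (Dk_step_sym e (#|T| - 1))).
exact: connect_trans Bw (to_hub w nbw).
Qed.
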